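(* Fix $\theta,E$, $0<\varepsilon<1/7$, $0<\hat\rho<1/2$, $\ell\in\mathbb{N}$ and $1<\gamma\le|\log\varepsilon|$; set $M=\max\{\ell,|\log\hat\rho|\}$, let $\hat\ell\in\mathbb{N}$ with $\hat\ell>16|\log\varepsilon|M$, and let $\check\gamma=\gamma-6|\log\varepsilon|M/\hat\ell$. Suppose the finite interval $\hat\Lambda\subset\mathbb{Z}$ is partitioned by $\mathcal{P}$ into consecutive intervals $\Lambda_l\cup\Lambda\cup\Lambda_r$ (left to right) such that: (1) $\Lambda_l$ and $\Lambda_r$ each satisfy the Green's function decay property for $(\ell,\gamma)$; (2) $R^{\hat\Lambda}=(H^{\hat\Lambda}(\theta)-E)^{-1}$ is well defined and, writing $\Lambda=[a,b]$ and $P$ for the coordinate projection onto $[a-\ell,b+\ell]\cap\hat\Lambda$, one has $\|P R^{\hat\Lambda}\Gamma^{\hat\Lambda}_{\mathcal{P}}\|\le 2\hat\rho^{-1}$; (3) $|\Lambda|\le M$. Then $\hat\Lambda$ satisfies the Green's function decay property for $(\hat\ell,\check\gamma)$.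
   Context: $H^{\Lambda}(\theta)$ is the Dirichlet restriction to a finite interval $\Lambda\subset\mathbb{Z}$ of $H=\varepsilon\Delta+V$, $(H\psi)(n)=\varepsilon(\psi(n+1)+\psi(n-1))+V_n\psi(n)$, with $V_n=v(\theta+n\alpha)$ a real bounded potential: a tridiagonal symmetric matrix with diagonal $V_m$, $m\in\Lambda$, and off-diagonal entries $\varepsilon$. For a partition $\mathcal{P}$ of $\Lambda$ into consecutive intervals $\Lambda_j$, $H^\Lambda_{\mathcal P}=\bigoplus_j H^{\Lambda_j}$ and $\Gamma^\Lambda_{\mathcal P}=H^\Lambda-H^\Lambda_{\mathcal P}$ (the $\varepsilon$ hopping terms connecting adjacent blocks); $R^\Lambda=(H^\Lambda-E)^{-1}$, $R^\Lambda(m,n)=\langle\delta_m,R^\Lambda\delta_n\rangle$. An interval $\Lambda$ satisfies the Green's function decay property for $(\ell,\gamma)$ (at the given $\theta,E$) if $E\notin\operatorname{spec}H^\Lambda(\theta)$ and $\log|R^\Lambda(m,n)|\le-\gamma|m-n|$ for all $m,n\in\Lambda$ with $|m-n|\ge\ell$. *)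

From HB Require Import structures.
From mathcomp Require Import all_boot all_order all_algebra.
From mathcomp Require Import all_classical all_reals.
From mathcomp Require Import topology normedtype sequences exp.
Set Implicit Arguments. Unset Strict Implicit. Unset Printing Implicit Defensive.
Import Order.TTheory GRing.Theory Num.Theory.
Local Open Scope ring_scope.
Local Open Scope classical_set_scope.

Definition qp_pot {R : realType} (v : R -> R) (alpha theta : R) (n : int) : R :=
  v (theta + n%:~R * alpha).

(* Dirichlet restriction H^Lambda of H = eps Delta + V to the interval
   Lambda = [s, s + n - 1] of Z; row/column index i : 'I_n corresponds to
   the site s + i. *)
Definition Hmat {R : realType} (eps : R) (V : int -> R) (s : int) (n : nat)
  : 'M[R]_n :=
  \matrix_(i < n, j < n)
    (if i == j then V (s + (i : nat)%:Z)
     else if (i.+1 == j) || (j.+1 == i) then eps else 0).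

Definition odist {n : nat} (i j : 'I_n) : nat := `|(i : nat)%:Z - (j : nat)%:Z|%N.

(* Green's function decay property for (l, gamma) on Lambda = [s, s+n-1]:
   E is not in spec H^Lambda, and log |R^Lambda(m,n)| <= -gamma |m-n| for
   |m - n| >= l (written without log, with the convention log 0 = -oo). *)
Definition GF_decay {R : realType} (eps : R) (V : int -> R) (s : int) (n : nat)
  (E : R) (l : nat) (gamma : R) : Prop :=
  ~~ eigenvalue (Hmat eps V s n) E /\
  forall i j : 'I_n, (l <= odist i j)%N ->
    `| invmx (Hmat eps V s n - E%:M) i j | <= expR (- (gamma * (odist i j)%:R)).

Definition l2norm {R : realType} {n : nat} (x : 'cV[R]_n) : R :=
  Num.sqrt (\sum_(i < n) x i 0 ^+ 2).

Definition opnorm {R : realType} {m n : nat} (A : 'M[R]_(m, n)) : R :=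
  sup [set r | exists x : 'cV[R]_n, l2norm x <= 1 /\ r = l2norm (A *m x)].

From HB Require Import structures.
From mathcomp Require Import all_boot all_order all_algebra.
From mathcomp Require Import all_classical all_reals.
From mathcomp Require Import topology normedtype sequences exp.
From mathcomp Require Import zify ring lra.
Import Order.TTheory GRing.Theory Num.Theory.
Local Open Scope ring_scope.

(* Write G, G_l, G_r for the Green's functions of hat Lambda, Lambda_l, Lambda_r.
   The second resolvent identity for the tridiagonal H expresses an entry of G
   with one index in Lambda_l (or Lambda_r) through G_l (or G_r) plus a single
   hopping term G(m, a) eps (or G(m, b) eps) at the edge of Lambda.  For m
   within distance l of Lambda these hopping terms are entries of P R Gamma, hence
   bounded by 2/rho; one more resolvent step extends the bound to all m on the
   relevant side.  Chaining at most two such identities with the decay of G_l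
   and G_r gives |G(m, n)| <= (1 + 2/rho) e^(gamma (|Lambda| + l)) e^(-gamma |m - n|)
   once |m - n| >= 2l + |Lambda|, and for |m - n| >= lhat the prefactor, at most
   e^(5 |log eps| M), is absorbed into the loss 6 |log eps| M / lhat of the rate. *)

(* Matrix entries indexed by [nat], with junk value [0] outside the matrix;
   this lets index arithmetic such as [p.-1] or [p + q + n] be done in [nat]. *)
Definition entry {R : realType} {n : nat} (X : 'M[R]_n) (i j : nat) : R :=
  match (insub i : option 'I_n), (insub j : option 'I_n) with
  | Some a, Some b => X a b | _, _ => 0 end.

Section Entries.
Context {R : realType} {n : nat}.
Implicit Types (X Y : 'M[R]_n).

Lemma entryE X (a b : 'I_n) : entry X a b = X a b.
Proof. by rewrite /entry !valK. Qed.

Lemma entry_outl X i j : (n <= i)%N -> entry X i j = 0.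
Proof. by move=> h; rewrite /entry insubN // -leqNgt. Qed.

Lemma entry_outr X i j : (n <= j)%N -> entry X i j = 0.
Proof. by move=> h; rewrite /entry; case: (insub i) => // a; rewrite insubN // -leqNgt. Qed.

Lemma entry_ord X i j (hi : (i < n)%N) (hj : (j < n)%N) :
  entry X i j = X (Ordinal hi) (Ordinal hj).
Proof. by rewrite -entryE. Qed.

Lemma entry_mul X Y i j : (i < n)%N -> (j < n)%N ->
  entry (X *m Y) i j = \sum_(0 <= k < n) entry X i k * entry Y k j.
Proof.
by move=> hi hj; rewrite entry_ord mxE big_mkord; apply: eq_bigr => k _; rewrite -!entryE.
Qed.

Lemma entryB X Y i j : entry (X - Y) i j = entry X i j - entry Y i j.
Proof.
case: (ltnP i n) => hi; last by rewrite !entry_outl // subr0.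
case: (ltnP j n) => hj; last by rewrite !entry_outr // subr0.
by rewrite !entry_ord !mxE.
Qed.

Lemma entry_scalar (a : R) i j : (i < n)%N -> (j < n)%N ->
  entry (a%:M : 'M[R]_n) i j = a * (i == j)%:R.
Proof. by move=> hi hj; rewrite entry_ord mxE mulr_natr. Qed.

Lemma entry_tr X i j : entry X^T i j = entry X j i.
Proof.
case: (ltnP i n) => hi; last by rewrite entry_outl // entry_outr.
case: (ltnP j n) => hj; last by rewrite entry_outr // entry_outl.
by rewrite !entry_ord mxE.
Qed.

Lemma entry_invmx_mul X m j : X \in unitmx -> (m < n)%N -> (j < n)%N ->
  \sum_(0 <= k < n) entry (invmx X) m k * entry X k j = (m == j)%:R.
Proof. by move=> u hm hj; rewrite -entry_mul // mulVmx // entry_scalar // mul1r. Qed.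

Lemma entry_mul_invmx X m j : X \in unitmx -> (m < n)%N -> (j < n)%N ->
  \sum_(0 <= k < n) entry X m k * entry (invmx X) k j = (m == j)%:R.
Proof. by move=> u hm hj; rewrite -entry_mul // mulmxV // entry_scalar // mul1r. Qed.

End Entries.

Lemma entry_block_mx {R : realType} a b (X : 'M[R]_a) (Y : 'M[R]_b) i j :
  (i < a + b)%N -> (j < a + b)%N ->
  entry (block_mx X 0 0 Y) i j =
  if (i < a)%N && (j < a)%N then entry X i j
  else if (a <= i)%N && (a <= j)%N then entry Y (i - a) (j - a) else 0.
Proof.
move=> hi hj; rewrite entry_ord /block_mx mxE.
case: splitP => [i' /= ei | i' /= ei]; rewrite mxE; case: splitP => [j' /= ej | j' /= ej].
all: subst i j; rewrite ?mxE; have := ltn_ord i'; have := ltn_ord j' => hj' hi'.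
- by rewrite hi' hj' /= entryE.
- case: ifP => [/andP[h1 h2]|_]; first lia. case: ifP => // /andP[h1 h2]; lia.
- case: ifP => [/andP[h1 h2]|_]; first lia. case: ifP => // /andP[h1 h2]; lia.
- by rewrite ltnNge leq_addr /= !leq_addr /= !addKn entryE.
Qed.

Lemma big_nat_delta {R : realType} (x o t : nat) (f : nat -> R) :
  \sum_(0 <= j < t) (x == o + j)%N%:R * f j =
  if (o <= x < o + t)%N then f (x - o)%N else 0.
Proof.
elim: t => [|t IH]; first by rewrite big_geq // addn0; case: ifP => // /andP[]; lia.
rewrite big_nat_recr //= IH.
case: (eqVneq x (o + t)%N) => [->|hne].
  by rewrite mul1r leq_addr addKn addnS ltnSn ltnn /= add0r.
rewrite mul0r addr0; case: ifP => h1; case: ifP => h2 //; move: h1 h2 hne; lia.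
Qed.

Section TridiagonalBlock.
Variables (R : realType) (N o t : nat) (eps : R) (a g b : nat -> nat -> R) (m : nat).
Hypotheses (a_far : forall k j, (k.+1 < j)%N || (j.+1 < k)%N -> a k j = 0)
  (a_sup : forall k, (k.+1 < N)%N -> a k k.+1 = eps)
  (a_sub : forall k, (k.+1 < N)%N -> a k.+1 k = eps)
  (t_gt0 : (0 < t)%N) (block_le : (o + t <= N)%N).

Lemma big_nat_tridiag_block j : (j < t)%N ->
  \sum_(0 <= k < N) g m k * a k (o + j)%N =
    \sum_(0 <= k < t) g m (o + k)%N * a (o + k)%N (o + j)%N
    + (if (0 < o)%N && (j == 0)%N then g m o.-1 * eps else 0)
    + (if (o + t < N)%N && (j == t.-1) then g m (o + t)%N * eps else 0).
Proof.
move=> jt; rewrite (@big_cat_nat _ _ _ (o + t)%N) //=; try lia.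
rewrite (@big_cat_nat _ _ _ o 0 (o + t)%N) //=; try lia.
have -> : \sum_(0 <= i < o) g m i * a i (o + j)%N =
    if (0 < o)%N && (j == 0)%N then g m o.-1 * eps else 0.
  case: (posnP o) => [->|o0] /=; first by rewrite big_geq.
  rewrite -{1}(prednK o0) big_nat_recr //= big1_seq ?add0r; last first.
    by move=> k; rewrite mem_index_iota => /andP[_ hk]; rewrite a_far ?mulr0 //; lia.
  case: (eqVneq j 0%N) => [->|jn]; last by rewrite a_far ?mulr0 //; lia.
  by rewrite (_ : (o + 0 = o.-1.+1)%N) ?a_sup //; lia.
have -> : \sum_(o <= i < o + t) g m i * a i (o + j)%N =
    \sum_(0 <= k < t) g m (o + k)%N * a (o + k)%N (o + j)%N.
  by rewrite -{1}(add0n o) big_addn addKn; apply: eq_big_nat => k _; rewrite addnC.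
have -> : \sum_(o + t <= i < N) g m i * a i (o + j)%N =
    if (o + t < N)%N && (j == t.-1) then g m (o + t)%N * eps else 0.
  case: ltnP => hN /=; last by rewrite big_geq.
  rewrite big_ltn // big1_seq ?addr0; last first.
    by move=> k; rewrite mem_index_iota => /and3P[_ hk _]; rewrite a_far ?mulr0 //; lia.
  case: (eqVneq j t.-1) => [->|jn]; last by rewrite a_far ?mulr0 //; lia.
  by rewrite (_ : (o + t = (o + t.-1).+1)%N) ?a_sub //; lia.
by rewrite [X in X + _]addrC.
Qed.

Hypotheses
  (g_inv : forall j, (j < N)%N -> \sum_(0 <= k < N) g m k * a k j = (m == j)%:R)
  (b_inv : forall k n, (k < t)%N -> (n < t)%N ->
     \sum_(0 <= j < t) a (o + k)%N (o + j)%N * b j n = (k == n)%:R).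

(* Second resolvent identity, entrywise: only the two hopping terms joining
   the block [o, o + t) to the rest of [0, N) survive. *)
Lemma tridiag_block_resolvent n : (n < t)%N ->
  g m (o + n)%N + (if (0 < o)%N then g m o.-1 * eps * b 0%N n else 0)
    + (if (o + t < N)%N then g m (o + t)%N * eps * b t.-1 n else 0)
  = if (o <= m < o + t)%N then b (m - o)%N n else 0.
Proof.
move=> nt.
have <- : \sum_(0 <= j < t) (\sum_(0 <= k < N) g m k * a k (o + j)%N) * b j n =
    if (o <= m < o + t)%N then b (m - o)%N n else 0.
  rewrite -(big_nat_delta m o t (fun j => b j n)); apply: eq_big_nat => j hj.
  by rewrite g_inv //; lia.
rewrite (eq_big_nat _ _ (fun j hj => congr1 (fun x => x * b j n)
  (big_nat_tridiag_block j _))); last by lia.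
under eq_bigr do rewrite !mulrDl.
rewrite !big_split /= -!addrA; congr (_ + _).
  under eq_bigr do rewrite mulr_suml.
  rewrite exchange_big /=.
  under eq_bigr do under eq_bigr do rewrite -mulrA.
  under eq_bigr do rewrite -mulr_sumr.
  rewrite (eq_big_nat _ _ (fun k hk => congr1 (fun x => g m (o + k)%N * x)
    (b_inv k n _ nt))); last by lia.
  transitivity (\sum_(0 <= k < t) (n == 0 + k)%N%:R * g m (o + k)%N).
    by rewrite big_nat_delta /= subn0 add0n nt.
  by apply: eq_big_nat => k _; rewrite mulrC add0n eq_sym.
congr (_ + _).
  rewrite big_ltn // big1_seq ?addr0; last first.
    move=> k; rewrite mem_index_iota => /and3P[_ hk _].
    by rewrite (_ : (k == 0)%N = false) ?andbF ?mul0r //; lia.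
  by case: ifP => _; rewrite /= ?mul0r.
rewrite [in X in _ = X](_ : t = t.-1.+1); last by lia.
rewrite big_nat_recr //= big1_seq ?add0r; last first.
  move=> k; rewrite mem_index_iota => /and3P[_ _ hk].
  by rewrite (_ : (k == t.-1)%N = false) ?andbF ?mul0r //; lia.
by rewrite eqxx andbT prednK //; case: ifP => _; rewrite ?mul0r.
Qed.

End TridiagonalBlock.

Lemma normr_le_l2norm {R : realType} {n} (y : 'cV[R]_n) i : `|y i 0| <= l2norm y.
Proof.
rewrite /l2norm -sqrtr_sqr ler_sqrt; last by apply: sumr_ge0 => k _; rewrite sqr_ge0.
by rewrite (bigD1 i) //= lerDl sumr_ge0 // => k _; rewrite sqr_ge0.
Qed.

Lemma l2norm_le_sum {R : realType} {n} (y : 'cV[R]_n) : l2norm y <= \sum_i `|y i 0|.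
Proof.
have T0 : 0 <= \sum_i `|y i 0| by apply: sumr_ge0.
rewrite /l2norm -(ger0_norm T0) -sqrtr_sqr ler_sqrt ?sqr_ge0 // expr2 mulr_suml.
apply: ler_sum => i _; rewrite -real_normK ?num_real // expr2 ler_wpM2l //.
by rewrite (bigD1 i) //= lerDl sumr_ge0.
Qed.

Lemma normr_entry_le_opnorm {R : realType} {N} (X : 'M[R]_N) (i j : 'I_N) :
  `|X i j| <= opnorm X.
Proof.
set S := [set r | exists x : 'cV[R]_N, l2norm x <= 1 /\ r = l2norm (X *m x)]%classic.
have S_sup : has_sup S.
  split; first by exists (l2norm (X *m 0)), 0; split; rewrite // /l2norm big1 ?sqrtr0 // => k _;
    rewrite mxE expr2 mulr0.
  exists (\sum_(a < N) \sum_(k < N) `|X a k|) => _ [x [hx ->]].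
  apply: le_trans (l2norm_le_sum (X *m x)) _; apply: ler_sum => a _.
  rewrite mxE; apply: le_trans (ler_norm_sum _ _ _) _; apply: ler_sum => k _.
  by rewrite normrM ler_piMr // (le_trans (normr_le_l2norm x k) hx).
have ej_in_S : S (l2norm (X *m (delta_mx j 0 : 'cV[R]_N))).
  exists (delta_mx j 0); split => //.
  rewrite /l2norm (bigD1 j) //= big1 ?addr0; last first.
    by move=> k hk; rewrite mxE (negbTE hk) /= expr2 mulr0.
  by rewrite mxE !eqxx expr2 mulr1 sqrtr1.
have -> : X i j = (X *m (delta_mx j 0 : 'cV[R]_N)) i 0.
  rewrite mxE (bigD1 j) //= !mxE !eqxx mulr1 big1 ?addr0 // => k hk.
  by rewrite !mxE (negbTE hk) /= mulr0.
exact: le_trans (normr_le_l2norm _ i) (sup_upper_bound S_sup ej_in_S).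
Qed.

Definition Hcoef {R : realType} (eps : R) (V : int -> R) (s : int) (i j : nat) : R :=
  if i == j then V (s + i%:Z) else if (i.+1 == j) || (j.+1 == i) then eps else 0.

Lemma Hcoef_shift {R : realType} (eps : R) V s o i j :
  Hcoef eps V s (o + i)%N (o + j)%N = Hcoef eps V (s + o%:Z) i j.
Proof.
rewrite /Hcoef eqn_add2l -!addnS !eqn_add2l.
by case: ifP => // _; rewrite -addrA -PoszD.
Qed.

Lemma entry_Hmat {R : realType} (eps : R) V s n i j : (i < n)%N -> (j < n)%N ->
  entry (Hmat eps V s n) i j = Hcoef eps V s i j.
Proof. by move=> hi hj; rewrite (entry_ord _ _ _ hi hj) mxE. Qed.

Lemma entry_Hmat_sub {R : realType} (eps : R) V s E n i j : (i < n)%N -> (j < n)%N ->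
  entry (Hmat eps V s n - E%:M) i j = Hcoef eps V s i j - E * (i == j)%:R.
Proof. by move=> hi hj; rewrite entryB entry_scalar // entry_Hmat. Qed.

Lemma Hmat_unit {R : realType} (eps : R) V s E n :
  ~~ eigenvalue (Hmat eps V s n) E -> Hmat eps V s n - E%:M \in unitmx.
Proof. by rewrite -row_free_unit -kermx_eq0 /eigenvalue /eigenspace negbK. Qed.

Lemma entry_invmx_Hmat_sym {R : realType} (eps : R) V s E n i j :
  entry (invmx (Hmat eps V s n - E%:M)) i j = entry (invmx (Hmat eps V s n - E%:M)) j i.
Proof.
have Hmat_tr : (Hmat eps V s n)^T = Hmat eps V s n.
  by apply/matrixP => a b; rewrite !mxE; case: eqVneq => [->|_] //; rewrite orbC.
by rewrite -entry_tr trmx_inv linearB /= Hmat_tr tr_scalar_mx.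
Qed.

Lemma Hmat_block_resolvent {R : realType} (eps : R) V s E (N o t m n : nat) :
  let G := entry (invmx (Hmat eps V s N - E%:M)) in
  let B := entry (invmx (Hmat eps V (s + o%:Z) t - E%:M)) in
  Hmat eps V s N - E%:M \in unitmx -> Hmat eps V (s + o%:Z) t - E%:M \in unitmx ->
  (m < N)%N -> (n < t)%N -> (o + t <= N)%N ->
  G m (o + n)%N + (if (0 < o)%N then G m o.-1 * eps * B 0%N n else 0)
    + (if (o + t < N)%N then G m (o + t)%N * eps * B t.-1 n else 0)
  = if (o <= m < o + t)%N then B (m - o)%N n else 0.
Proof.
move=> G B uN ut hm hn hot.
pose a := entry (Hmat eps V s N - E%:M).
apply: (@tridiag_block_resolvent R N o t eps a) => //; try lia.
- move=> k j hkj.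
  case: (ltnP k N) => hk; last by rewrite /a entry_outl.
  case: (ltnP j N) => hj; last by rewrite /a entry_outr.
  rewrite /a entry_Hmat_sub // /Hcoef.
  have -> : (k == j) = false by lia.
  have -> : (k.+1 == j) || (j.+1 == k) = false by lia.
  by rewrite mulr0 subr0.
- move=> k hk; rewrite /a entry_Hmat_sub; try lia.
  by rewrite /Hcoef (_ : (k == k.+1) = false) ?mulr0 ?subr0 ?eqxx //; lia.
- move=> k hk; rewrite /a entry_Hmat_sub; try lia.
  by rewrite /Hcoef (_ : (k.+1 == k) = false) ?mulr0 ?subr0 ?eqxx ?orbT //; lia.
- by move=> j hj; rewrite /G /a entry_invmx_mul.
- move=> k n' hk hn'; rewrite -(entry_mul_invmx _ _ _ ut hk hn'); apply: eq_big_nat => j hj.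
  by rewrite /a !entry_Hmat_sub ?Hcoef_shift ?eqn_add2l //; lia.
Qed.

Lemma GF_decay_entry {R : realType} (eps : R) V s n E l gamma :
  GF_decay eps V s n E l gamma ->
  forall i j, (i <= j < n)%N -> (l <= j - i)%N ->
  `|entry (invmx (Hmat eps V s n - E%:M)) i j| <= expR (- (gamma * (j - i)%:R)).
Proof.
move=> [_ decay] i j /andP[ij jn] lij; have i_lt : (i < n)%N by lia.
have dist : odist (Ordinal i_lt) (Ordinal jn) = (j - i)%N by rewrite /odist /=; lia.
by rewrite (entry_ord _ _ _ i_lt jn) -dist; apply: decay; rewrite dist.
Qed.

Section ExponentialDecay.
Context {R : realType} {gamma : R}.
Hypothesis gamma_ge0 : 0 <= gamma.
Local Notation decay d := (expR (- (gamma * d%:R))).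

Lemma decay_le1 d : decay d <= 1.
Proof. by rewrite -[X in _ <= X]expR0 ler_expR oppr_le0 mulr_ge0. Qed.

Lemma decay_le d d' : (d <= d')%N -> decay d' <= decay d.
Proof. by move=> dd'; rewrite ler_expR lerN2 ler_wpM2l // ler_nat. Qed.

Lemma decay_shift (c C : R) (x k d : nat) : 0 <= C -> c <= C -> (d <= x + k)%N ->
  c * decay x <= C * expR (gamma * k%:R) * decay d.
Proof.
move=> C_ge0 cC dxk; apply: le_trans (ler_wpM2r (expR_ge0 _) cC) _.
rewrite -mulrA ler_wpM2l // -expRD ler_expR.
have : 0 <= gamma * (x%:R + k%:R - d%:R) by rewrite mulr_ge0 // subr_ge0 -natrD ler_nat.
by rewrite !mulrDr mulrN; lra.
Qed.

End ExponentialDecay.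

Lemma normr_hop_le {R : realType} {b c e K Ec : R} : 0 < e ->
  `|b| * e <= K -> `|c| <= Ec -> `|b * e * c| <= K * Ec.
Proof. by move=> e0 hb hc; rewrite !normrM (gtr0_norm e0) ler_pM // mulr_ge0 // ltW. Qed.

Section Decoupling.
Variables (R : realType) (eps : R) (V : int -> R) (s : int) (E : R) (p q r l : nat).
Variables (gamma K : R).
Local Notation N := (p + q + r)%N.
Local Notation Hhat := (Hmat eps V s N).
Local Notation Hl := (Hmat eps V s p).
Local Notation Hr := (Hmat eps V (s + p%:Z + q%:Z) r).
Local Notation G := (entry (invmx (Hhat - E%:M))).
Local Notation Gl := (entry (invmx (Hl - E%:M))).
Local Notation Gr := (entry (invmx (Hr - E%:M))).
Local Notation Gamma := (Hhat - block_mx (block_mx Hl 0 0 (Hmat eps V (s + p%:Z) q)) 0 0 Hr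
  : 'M[R]_N).
Local Notation P := (\matrix_(i, j) ((i == j) && (p <= i + l)%N && (i < p + q + l)%N)%:R
  : 'M[R]_N).
Local Notation decay d := (expR (- (gamma * d%:R))).

Hypotheses (eps_gt0 : 0 < eps) (p_gt0 : (0 < p)%N) (q_gt0 : (0 < q)%N) (r_gt0 : (0 < r)%N).
Hypotheses (Hhat_unit : Hhat - E%:M \in unitmx) (Hl_unit : Hl - E%:M \in unitmx)
  (Hr_unit : Hr - E%:M \in unitmx).

(* Sites of hat Lambda are 0, ..., N - 1, with Lambda_l = [0, p), Lambda = [p, p + q)
   and Lambda_r = [p + q, N); Gamma only couples p - 1 with p and p + q - 1 with p + q. *)
Lemma G_left_row m n : (m < p)%N -> (n < N)%N ->
  G m n = (if (n < p)%N then Gl m n else 0) - G n p * eps * Gl m p.-1.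
Proof.
move=> mp nN; have Hl_unit0 : Hmat eps V (s + 0%:Z) p - E%:M \in unitmx by rewrite addr0.
have hot : (0 + p <= N)%N by lia.
have := @Hmat_block_resolvent _ eps V s E N 0 p n m Hhat_unit Hl_unit0 nN mp hot.
rewrite /= !add0n subn0 (_ : (p < N)%N = true) ?addr0; last by lia.
rewrite entry_invmx_Hmat_sym (entry_invmx_Hmat_sym _ _ _ _ p m).
by rewrite (entry_invmx_Hmat_sym _ _ _ _ p m p.-1) => <-; rewrite addrK.
Qed.

Lemma G_right_col m n : (m < N)%N -> (p + q <= n < N)%N ->
  G m n = (if (p + q <= m)%N then Gr (m - (p + q)) (n - (p + q)) else 0)
          - G m (p + q).-1 * eps * Gr 0 (n - (p + q)).
Proof.
move=> mN /andP[pqn nN].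
have Hr_unit' : Hmat eps V (s + (p + q)%N%:Z) r - E%:M \in unitmx by rewrite PoszD addrA.
have hot : (p + q + r <= N)%N by [].
have := @Hmat_block_resolvent _ eps V s E N (p + q) r m (n - (p + q)) Hhat_unit Hr_unit'
  mN (ltac:(lia)) hot.
rewrite /= (_ : (0 < p + q)%N = true) ?ltnn ?addr0 ?subnKC ?mN ?andbT //; try lia.
by rewrite PoszD addrA => <-; rewrite addrK.
Qed.

Lemma entry_Gamma k j : (k < N)%N -> (j < N)%N ->
  entry Gamma k j =
  if [|| (k < p) && (j < p), (p <= k < p + q) && (p <= j < p + q)
      | (p + q <= k) && (p + q <= j)]%N then 0 else Hcoef eps V s k j.
Proof.
move=> kN jN; rewrite entryB entry_Hmat // entry_block_mx //.
case: ifP => [/andP[k_pq j_pq] | kj_pq].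
  rewrite entry_block_mx; try lia.
  case: ifP => [/andP[kp jp] | kj_p].
    by rewrite entry_Hmat // subrr (_ : [|| _, _ | _] = true) //; lia.
  case: ifP => [/andP[pk pj] | kj_m]; last first.
    by rewrite subr0 (_ : [|| _, _ | _] = false) //; lia.
  rewrite entry_Hmat; try lia.
  by rewrite -Hcoef_shift !subnKC // subrr (_ : [|| _, _ | _] = true) //; lia.
case: ifP => [/andP[pk pj] | kj_r]; last first.
  by rewrite subr0 (_ : [|| _, _ | _] = false) //; lia.
rewrite entry_Hmat; try lia.
by rewrite -addrA -PoszD -Hcoef_shift !subnKC // subrr (_ : [|| _, _ | _] = true) //; lia.
Qed.

Lemma entry_Gamma_left k : (k < N)%N -> entry Gamma k p.-1 = (k == p)%:R * eps.
Proof.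
move=> kN; rewrite entry_Gamma; try lia.
case: ifP => [same | cross]; first by rewrite (_ : (k == p) = false) ?mul0r //; lia.
rewrite /Hcoef (_ : (k == p.-1) = false); last by lia.
case: (eqVneq k p) => [-> | kp]; first by rewrite prednK // eqxx orbT mul1r.
by rewrite (_ : _ || _ = false) ?mul0r //; lia.
Qed.

Lemma entry_Gamma_right k : (k < N)%N -> entry Gamma k (p + q) = (k == (p + q).-1)%:R * eps.
Proof.
move=> kN; rewrite entry_Gamma; try lia.
case: ifP => [same | cross]; first by rewrite (_ : (k == _) = false) ?mul0r //; lia.
rewrite /Hcoef (_ : (k == p + q) = false); last by lia.
case: (eqVneq k (p + q).-1) => [-> | kpq]; first by rewrite prednK ?eqxx ?mul1r //; lia.
by rewrite (_ : _ || _ = false) ?mul0r //; lia.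
Qed.

Hypothesis PGGamma_le : opnorm (P *m invmx (Hhat - E%:M) *m Gamma) <= K.

Lemma entry_P_mul_window i k (X : 'M[R]_N) : (i < N)%N -> (k < N)%N ->
  (p <= i + l)%N -> (i < p + q + l)%N -> entry (P *m X) i k = entry X i k.
Proof.
move=> iN kN pil ipql; rewrite entry_mul //.
transitivity (\sum_(0 <= j < N) (i == 0 + j)%N%:R * entry X j k).
  apply: eq_big_nat => j /andP[_ jN].
  by rewrite (entry_ord _ _ _ iN jN) mxE /= pil ipql !andbT add0n.
by rewrite big_nat_delta /= subn0 iN.
Qed.

Lemma window_hop_bound i j c : (i < N)%N -> (j < N)%N -> (c < N)%N ->
  (p <= i + l)%N -> (i < p + q + l)%N ->
  (forall k, (k < N)%N -> entry Gamma k j = (k == c)%:R * eps) ->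
  `|G i c| * eps <= K.
Proof.
move=> iN jN cN pil ipql Gamma_col.
have := le_trans (normr_entry_le_opnorm _ (Ordinal iN) (Ordinal jN)) PGGamma_le.
rewrite -entry_ord entry_mul //.
have -> : \sum_(0 <= k < N) entry (P *m invmx (Hhat - E%:M)) i k * entry Gamma k j
    = G i c * eps.
  transitivity (\sum_(0 <= k < N) (c == 0 + k)%N%:R * (G i k * eps)).
    apply: eq_big_nat => k kN; rewrite entry_P_mul_window ?Gamma_col //; try lia.
    by rewrite mulrCA eq_sym.
  by rewrite big_nat_delta /= subn0 cN.
by rewrite normrM (gtr0_norm eps_gt0).
Qed.

Lemma window_bound_left i : (i < N)%N -> (p <= i + l)%N -> (i < p + q + l)%N ->
  `|G i p| * eps <= K.
Proof.
by move=> *; apply: (@window_hop_bound i p.-1) => //; [lia | lia | exact: entry_Gamma_left].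
Qed.

Lemma window_bound_right i : (i < N)%N -> (p <= i + l)%N -> (i < p + q + l)%N ->
  `|G i (p + q).-1| * eps <= K.
Proof.
by move=> *; apply: (@window_hop_bound i (p + q)) => //; [lia | lia | exact: entry_Gamma_right].
Qed.

Lemma K_ge0 : 0 <= K.
Proof.
have N_gt0 : (0 < N)%N by lia.
exact: le_trans (normr_ge0 _)
  (le_trans (normr_entry_le_opnorm _ (Ordinal N_gt0) (Ordinal N_gt0)) PGGamma_le).
Qed.

Hypotheses (gamma_ge0 : 0 <= gamma) (eps_le : eps <= expR (- gamma)).
Hypothesis Gl_decay :
  forall i j, (i <= j < p)%N -> (l <= j - i)%N -> `|Gl i j| <= decay (j - i).
Hypothesis Gr_decay :
  forall i j, (i <= j < r)%N -> (l <= j - i)%N -> `|Gr i j| <= decay (j - i).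

Lemma eps_le1 : eps <= 1.
Proof. by apply: le_trans eps_le _; rewrite -[X in _ <= X]expR0 ler_expR oppr_le0. Qed.

Lemma Gl_decay_le i j d : (i <= j < p)%N -> (l <= d <= j - i)%N -> `|Gl i j| <= decay d.
Proof.
move=> ijp /andP[ld dji].
by apply: le_trans (decay_le gamma_ge0 _ _ dji); apply: Gl_decay => //; lia.
Qed.

Lemma Gr_decay_le i j d : (i <= j < r)%N -> (l <= d <= j - i)%N -> `|Gr i j| <= decay d.
Proof.
move=> ijr /andP[ld dji].
by apply: le_trans (decay_le gamma_ge0 _ _ dji); apply: Gr_decay => //; lia.
Qed.

Lemma left_edge_bound i : (i < p + q)%N -> `|G i p| * eps <= K.
Proof.
move=> ipq; have [pil | ilp] := leqP p (i + l); first by apply: window_bound_left; lia.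
rewrite (G_left_row i p) ?ltnn ?sub0r ?normrN; try lia.
have Gpp := window_bound_left p (ltac:(lia)) (ltac:(lia)) (ltac:(lia)).
have Gl_le1 : `|Gl i p.-1| <= 1.
  by apply: le_trans (decay_le1 gamma_ge0 (p.-1 - i)); apply: Gl_decay_le; lia.
apply: le_trans (ler_wpM2r (ltW eps_gt0) (normr_hop_le eps_gt0 Gpp Gl_le1)) _.
by rewrite mulr1 ler_piMr ?K_ge0 ?eps_le1.
Qed.

Lemma right_edge_bound i : (p <= i < N)%N -> `|G i (p + q).-1| * eps <= K.
Proof.
move=> /andP[pi iN]; have [ipql | pqli] := ltnP i (p + q + l).
  by apply: window_bound_right; lia.
rewrite entry_invmx_Hmat_sym (G_right_col (p + q).-1 i) ?sub0r ?normrN; try lia.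
rewrite (_ : (p + q <= (p + q).-1)%N = false) ?sub0r ?normrN; last by lia.
have Gpq := window_bound_right (p + q).-1 (ltac:(lia)) (ltac:(lia)) (ltac:(lia)).
have Gr_le1 : `|Gr 0 (i - (p + q))| <= 1.
  by apply: le_trans (decay_le1 gamma_ge0 (i - (p + q))); apply: Gr_decay_le; lia.
apply: le_trans (ler_wpM2r (ltW eps_gt0) (normr_hop_le eps_gt0 Gpq Gr_le1)) _.
by rewrite mulr1 ler_piMr ?K_ge0 ?eps_le1.
Qed.

Local Notation prefactor := ((1 + K) * expR (gamma * (q + l)%:R)).

Lemma decay_left_left m n : (m < n < p)%N -> (l <= n - m)%N ->
  `|G m n| <= prefactor * decay (n - m).
Proof.
move=> /andP[mn np] lnm; rewrite (G_left_row m n) ?np; try lia.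
apply: le_trans (ler_normB _ _) _.
apply: le_trans (_ : decay (n - m) + K * decay (n - m) <= _).
  apply: lerD; first by apply: Gl_decay_le; lia.
  by apply: normr_hop_le => //; [apply: left_edge_bound | apply: Gl_decay_le]; lia.
rewrite -[X in X + _]mul1r -mulrDl.
by apply: decay_shift; rewrite ?addr_ge0 ?K_ge0 //; lia.
Qed.

Lemma decay_right_right m n : (p + q <= m < n)%N -> (n < N)%N -> (l <= n - m)%N ->
  `|G m n| <= prefactor * decay (n - m).
Proof.
move=> /andP[pqm mn] nN lnm; rewrite (G_right_col m n) ?pqm; try lia.
apply: le_trans (ler_normB _ _) _.
apply: le_trans (_ : decay (n - m) + K * decay (n - m) <= _).
  apply: lerD; first by apply: Gr_decay_le; lia.
  by apply: normr_hop_le => //; [apply: right_edge_bound | apply: Gr_decay_le]; lia.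
rewrite -[X in X + _]mul1r -mulrDl.
by apply: decay_shift; rewrite ?addr_ge0 ?K_ge0 //; lia.
Qed.

Lemma decay_middle_right m n : (p <= m < p + q)%N -> (p + q <= n < N)%N ->
  (q + l <= n - m)%N -> `|G m n| <= prefactor * decay (n - m).
Proof.
move=> /andP[pm mpq] /andP[pqn nN] lnm.
rewrite (G_right_col m n) ?ifN ?sub0r ?normrN; try lia.
apply: le_trans (normr_hop_le eps_gt0 (right_edge_bound m _)
  (Gr_decay_le 0 (n - (p + q)) (n - (p + q)) _ _)) _; try lia.
by apply: decay_shift; rewrite ?addr_ge0 ?K_ge0 ?lerDr //; lia.
Qed.

Lemma decay_left_middle m n : (m < p)%N -> (p <= n < p + q)%N ->
  (q + l <= n - m)%N -> `|G m n| <= prefactor * decay (n - m).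
Proof.
move=> mp /andP[pn npq] lnm.
rewrite (G_left_row m n) ?ifN ?sub0r ?normrN; try lia.
apply: le_trans (normr_hop_le eps_gt0 (left_edge_bound n _)
  (Gl_decay_le m p.-1 (p.-1 - m) _ _)) _; try lia.
by apply: decay_shift; rewrite ?addr_ge0 ?K_ge0 ?lerDr //; lia.
Qed.

(* Here two resolvent steps are chained, but the second hopping factor is paid by
   eps <= e^-gamma, so crossing Lambda costs the factor K only once. *)
Lemma decay_far_across m n : (m + l < p)%N -> (p + q + l <= n < N)%N ->
  `|G m n| <= K * decay (n - m - q).
Proof.
move=> mlp /andP[pqln nN].
rewrite (G_left_row m n) ?ifN ?sub0r ?normrN; try lia.
rewrite entry_invmx_Hmat_sym (G_right_col p n) ?ifN ?sub0r ?mulNr ?normrN; try lia.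
set A := (n - (p + q))%N; set B := (p.-1 - m)%N.
have -> : decay (n - m - q) = decay A * expR (- gamma) * decay B.
  by rewrite -!expRD (_ : (n - m - q = A + 1 + B)%N) ?natrD; [congr expR; ring | lia].
have GpGr : `|G p (p + q).-1 * eps * Gr 0 A| <= K * decay A.
  by apply: normr_hop_le => //; [apply: window_bound_right | apply: Gr_decay_le]; lia.
rewrite normrM [`|_ * eps|]normrM (gtr0_norm eps_gt0) !mulrA.
apply: ler_pM; rewrite ?mulr_ge0 ?(ltW eps_gt0) //; last by apply: Gl_decay_le; lia.
exact: ler_pM (normr_ge0 _) (ltW eps_gt0) GpGr eps_le.
Qed.

Lemma decay_across m n : (m < p)%N -> (p + q <= n < N)%N ->
  (2 * l + q <= n - m)%N -> `|G m n| <= prefactor * decay (n - m).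
Proof.
move=> mp /andP[pqn nN] lnm.
have [pml | mlp] := leqP p (m + l).
  rewrite (G_right_col m n) ?ifN ?sub0r ?normrN; try lia.
  apply: le_trans (normr_hop_le eps_gt0 (window_bound_right m _ _ _)
    (Gr_decay_le 0 (n - (p + q)) (n - (p + q)) _ _)) _; try lia.
  by apply: decay_shift; rewrite ?addr_ge0 ?K_ge0 ?lerDr //; lia.
have [npql | pqln] := ltnP n (p + q + l).
  rewrite (G_left_row m n) ?ifN ?sub0r ?normrN; try lia.
  apply: le_trans (normr_hop_le eps_gt0 (window_bound_left n _ _ _)
    (Gl_decay_le m p.-1 (p.-1 - m) _ _)) _; try lia.
  by apply: decay_shift; rewrite ?addr_ge0 ?K_ge0 ?lerDr //; lia.
have far : (p + q + l <= n < N)%N by lia.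
apply: le_trans (decay_far_across m n mlp far) _.
by apply: decay_shift; rewrite ?addr_ge0 ?K_ge0 ?lerDr //; lia.
Qed.

Lemma G_decay m n : (m < n < N)%N -> (2 * l + q <= n - m)%N ->
  `|G m n| <= prefactor * decay (n - m).
Proof.
move=> /andP[mn nN] lnm.
have [mp | pm] := ltnP m p.
  have [np | pn] := ltnP n p; first by apply: decay_left_left; lia.
  have [npq | pqn] := ltnP n (p + q); first by apply: decay_left_middle; lia.
  by apply: decay_across; lia.
have [mpq | pqm] := ltnP m (p + q); first by apply: decay_middle_right; lia.
by apply: decay_right_right; lia.
Qed.

End Decoupling.

Lemma one_add_2_div_le_expR {R : realType} (rho : R) : 0 < rho -> rho < 1 / 2 ->
  1 + 2 / rho <= expR (3 * `|ln rho|).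
Proof.
move=> rho_gt0 rho_lt.
have ln_lt0 : ln rho < 0 by rewrite ln_lt0 // rho_gt0 /=; lra.
have expR_ln : expR `|ln rho| = rho^-1.
  by rewrite ler0_norm ?(ltW ln_lt0) // expRN lnK ?posrE.
have -> : expR (3 * `|ln rho|) = rho^-1 * (rho^-1 * rho^-1).
  by rewrite -expR_ln -!expRD; congr expR; ring.
have u_gt2 : 2 < rho^-1.
  have : rho * rho^-1 = 1 by rewrite mulfV // gt_eqF.
  by move=> h; nra.
by rewrite mulrC; nra.
Qed.

Lemma prefactor_absorbed {R : realType} {L M gamma rho : R} {q l lhat d : nat} :
  0 < rho -> rho < 1 / 2 -> 1 < gamma -> gamma <= L ->
  `|ln rho| <= M -> l%:R <= M -> q%:R <= M -> (0 < lhat)%N -> (lhat <= d)%N ->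
  (1 + 2 / rho) * expR (gamma * (q + l)%:R) * expR (- (gamma * d%:R))
    <= expR (- ((gamma - 6 * L * M / lhat%:R) * d%:R)).
Proof.
move=> rho_gt0 rho_lt gamma_gt1 gamma_le rho_M l_M q_M lhat_gt0 lhat_d.
have M_ge0 : 0 <= M by apply: le_trans rho_M.
apply: le_trans (_ : expR (3 * M) * expR (2 * L * M) * expR (- (gamma * d%:R)) <= _).
  rewrite ler_wpM2r ?expR_ge0 //; apply: ler_pM; rewrite ?expR_ge0 //.
  - by rewrite addr_ge0 ?divr_ge0 // ltW.
  - apply: le_trans (one_add_2_div_le_expR _ rho_gt0 rho_lt) _.
    by rewrite ler_expR ler_pM2l.
  - rewrite ler_expR natrD (mulrC 2) -mulrA; apply: ler_pM; rewrite ?addr_ge0 //; lra.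
rewrite -!expRD ler_expR.
have t_ge1 : 1 <= d%:R / lhat%:R :> R.
  by rewrite ler_pdivlMr ?ltr0n // mul1r ler_nat.
have -> : - ((gamma - 6 * L * M / lhat%:R) * d%:R)
    = 6 * L * M * (d%:R / lhat%:R) - gamma * d%:R by ring.
have L_gt1 : 1 < L by lra.
have : 0 <= L * M * (d%:R / lhat%:R - 1) by rewrite !mulr_ge0 // ?subr_ge0; lra.
by nra.
Qed.

Lemma odistC n (i j : 'I_n) : odist i j = odist j i.
Proof. by rewrite /odist distnC. Qed.

Lemma odistii n (i : 'I_n) : odist i i = 0%N.
Proof. by rewrite /odist subrr. Qed.

Lemma odist_le n (i j : 'I_n) : (i <= j)%N -> odist i j = (j - i)%N.
Proof. by move=> ij; rewrite /odist; lia. Qed.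

Theorem lemmaA2 (R : realType) (v : R -> R) (alpha theta E eps rho gamma : R)
  (l lhat : nat) (s : int) (p q r : nat) :
  (exists C : R, forall x, `|v x| <= C) ->
  0 < eps -> eps < 1 / 7 ->
  0 < rho -> rho < 1 / 2 ->
  1 < gamma -> gamma <= `|ln eps| ->
  let M := Num.max (l%:R) `|ln rho| in
  16 * `|ln eps| * M < lhat%:R ->
  let gcheck := gamma - 6 * `|ln eps| * M / lhat%:R in
  (0 < p)%N -> (0 < q)%N -> (0 < r)%N ->
  let V := qp_pot v alpha theta in
  let Hhat := Hmat eps V s (p + q + r) in
  let Hl := Hmat eps V s p in
  let Hm := Hmat eps V (s + p%:Z) q in
  let Hr := Hmat eps V (s + p%:Z + q%:Z) r in
  let Gamma : 'M[R]_(p + q + r) := Hhat - block_mx (block_mx Hl 0 0 Hm) 0 0 Hr in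
  let P : 'M[R]_(p + q + r) :=
    \matrix_(i, j) ((i == j) && (p <= i + l)%N && (i < p + q + l)%N)%:R in
  (* (1) *)
  GF_decay eps V s p E l gamma ->
  GF_decay eps V (s + p%:Z + q%:Z) r E l gamma ->
  (* (2) *)
  ~~ eigenvalue Hhat E ->
  opnorm (P *m invmx (Hhat - E%:M) *m Gamma) <= 2 / rho ->
  (* (3) *)
  q%:R <= M ->
  GF_decay eps V s (p + q + r) E lhat gcheck.
Proof.
(* The boundedness of v plays no role: only the values V_n enter. *)
move=> _ eps_gt0 eps_lt1_7 rho_gt0 rho_lt gamma_gt1 gamma_le M lhat_gt gcheck p_gt0 q_gt0 r_gt0
  V Hhat Hl Hm Hr Gamma P Hl_decay Hr_decay Hhat_noeig PGGamma_le q_M.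
split=> // i j lhat_ij.
have rho_M : `|ln rho| <= M by rewrite le_max lexx orbT.
have l_M : l%:R <= M by rewrite le_max lexx.
have lhat_ge : (2 * l + q < lhat)%N.
  rewrite -(ltr_nat R) natrD natrM; apply: le_lt_trans lhat_gt.
  have M_ge0 : 0 <= M by apply: le_trans rho_M.
  have : 16 * M <= 16 * `|ln eps| * M.
    by rewrite -mulrA ler_pM2l // ler_peMl //; lra.
  by move: l_M q_M M_ge0; lra.
have eps_le : eps <= expR (- gamma).
  rewrite -[X in X <= _]lnK ?posrE // ler_expR.
  by move: gamma_le; rewrite ler0_norm ?ln_le0 ?(ltW eps_gt0) //; lra.
wlog ij : i j lhat_ij / (i < j)%N.
  move=> sym_case; have [ij | ji | ij] := ltngtP i j; first exact: sym_case.
    rewrite -entryE entry_invmx_Hmat_sym entryE odistC.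
    by apply: sym_case; rewrite // odistC.
  by move: lhat_ij; rewrite (val_inj ij) odistii leqNgt (leq_ltn_trans (leq0n _) lhat_ge).
rewrite odist_le ?(ltnW ij) // in lhat_ij *.
rewrite -entryE; apply: le_trans (prefactor_absorbed rho_gt0 rho_lt gamma_gt1 gamma_le
  rho_M l_M q_M (leq_ltn_trans (leq0n _) lhat_ge) lhat_ij).
apply: G_decay; rewrite ?ij ?ltn_ord ?(leq_trans (ltnW lhat_ge) lhat_ij) //.
- exact: Hmat_unit.
- by case: Hl_decay => /Hmat_unit.
- by case: Hr_decay => /Hmat_unit.
- exact: ltW (lt_trans ltr01 gamma_gt1).
- exact: GF_decay_entry.
- exact: GF_decay_entry.
Qed.
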